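(* Let $K \le L$ be positive integers, $N = L+K$, and let $\mathbf{P}_d \in \mathbb{C}^{L\times K}$ be an arbitrary (fully digital) beamforming matrix with singular value decomposition $\mathbf{P}_d = \mathbf{U}\mathbf{S}\mathbf{V}^\mathsf{H}$, where $\mathbf{U} = [\mathbf{U}_1, \mathbf{U}_2] \in \mathbb{C}^{L\times L}$ is unitary with $\mathbf{U}_1 \in \mathbb{C}^{L\times K}$, $\mathbf{U}_2 \in \mathbb{C}^{L\times (L-K)}$, $\mathbf{S} \in \mathbb{R}^{L\times K}$ is a rectangular diagonal matrix with nonnegative diagonal entries $s_1,\dots,s_K$, and $\mathbf{V}\in\mathbb{C}^{K\times K}$ is unitary. Define $$\boldsymbol\Theta^\star = \begin{bmatrix} \mathbf{0}_{K\times K} & \mathbf{V}^* \\ \mathbf{V}^\mathsf{H} & \mathbf{0}_{K\times K}\end{bmatrix}\in\mathbb{C}^{2K\times 2K},\qquad \boldsymbol\Phi^\star = \begin{bmatrix} \mathbf{0}_{K\times K} & \mathbf{U}_1^\mathsf{T} \\ \mathbf{U}_1 & -\mathbf{U}_2\mathbf{U}_2^\mathsf{T}\end{bmatrix}\in\mathbb{C}^{N\times N},$$ and $(\mathbf{P}^\star)^{1/2} = 4\,\operatorname{diag}(s_1,\dots,s_K)\in\mathbb{R}^{K\times K}$. Then $\boldsymbol\Theta^\star$ and $\boldsymbol\Phi^\star$ are feasible scattering matrices of lossless reciprocal MiLACs, i.e. $(\boldsymbol\Theta^\star)^\mathsf{H}\boldsymbol\Theta^\star = \mathbf{I}_{2K}$,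 $\boldsymbol\Theta^\star = (\boldsymbol\Theta^\star)^\mathsf{T}$, $(\boldsymbol\Phi^\star)^\mathsf{H}\boldsymbol\Phi^\star = \mathbf{I}_{N}$, $\boldsymbol\Phi^\star = (\boldsymbol\Phi^\star)^\mathsf{T}$; the corresponding analog beamformers are $$\mathbf{F}^\star = \tfrac12[\boldsymbol\Theta^\star]_{K+1:2K,\,1:K} = \tfrac12\mathbf{V}^\mathsf{H},\qquad \mathbf{W}^\star = \tfrac12[\boldsymbol\Phi^\star]_{K+1:N,\,1:K} = \tfrac12\mathbf{U}_1;$$ and the effective two-layer MiLAC beamforming matrix satisfies $\mathbf{G} := \mathbf{W}^\star(\mathbf{P}^\star)^{1/2}\mathbf{F}^\star = \mathbf{P}_d$. Hence the two-layer MiLAC architecture can exactly realize any fully digital beamformer.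
   Context: Setting: a base station with $L$ antennas serves $K$ single-antenna users. In the two-layer MiLAC (microwave linear analog computer) transmitter, the symbol vector $\mathbf{s}\in\mathbb{C}^K$ is mapped to the transmit signal $\mathbf{x} = \mathbf{W}\mathbf{P}^{1/2}\mathbf{F}\mathbf{s}$, where: MiLAC 1 is a $2K$-port lossless reciprocal microwave network with scattering matrix $\boldsymbol\Theta\in\mathbb{C}^{2K\times 2K}$ and analog beamformer $\mathbf{F} = \tfrac12[\boldsymbol\Theta]_{K+1:2K,1:K}$ (rows $K+1$ to $2K$, columns $1$ to $K$); MiLAC 2 is an $N=(L+K)$-port lossless reciprocal network with scattering matrix $\boldsymbol\Phi\in\mathbb{C}^{N\times N}$ and analog beamformer $\mathbf{W} = \tfrac12[\boldsymbol\Phi]_{K+1:N,1:K}$; and $\mathbf{P}^{1/2} = \operatorname{diag}(\sqrt{p_1},\dots,\sqrt{p_K})$ is the diagonal amplifier power-allocation matrix. Losslessness and reciprocity mean the scattering matrices are unitary and symmetric: $\boldsymbol\Theta^\mathsf{H}\boldsymbol\Theta = \mathbf{I}$, $\boldsymbol\Theta = \boldsymbol\Theta^\mathsf{T}$, and likewise for $\boldsymbol\Phi$. $(\cdot)^*$ is entrywise complex conjugate, $(\cdot)^\mathsf{T}$ transpose, $(\cdot)^\mathsf{H}$ conjugate transpose. *)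

From mathcomp Require Import all_boot all_order all_algebra.
Set Implicit Arguments. Unset Strict Implicit. Unset Printing Implicit Defensive.
Import Order.TTheory GRing.Theory Num.Theory.
Local Open Scope ring_scope.

(* Complex numbers: an arbitrary numClosedFieldType C (e.g. algC), with
   complex conjugation conjC ( x^* ). *)

Definition mxconj (C : numClosedFieldType) m n (A : 'M[C]_(m, n)) : 'M[C]_(m, n) :=
  map_mx (@Num.conj C) A.

Definition mxH (C : numClosedFieldType) m n (A : 'M[C]_(m, n)) : 'M[C]_(n, m) :=
  (mxconj A)^T.

Definition unitary_mx (C : numClosedFieldType) m n (A : 'M[C]_(m, n)) : Prop :=
  mxH A *m A = 1%:M /\ A *m mxH A = 1%:M.

Definition lossless_reciprocal (C : numClosedFieldType) n (A : 'M[C]_n) : Prop :=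
  mxH A *m A = 1%:M /\ A = A^T.

Definition milacF (C : numClosedFieldType) K (Theta : 'M[C]_(K + K)) : 'M[C]_(K, K) :=
  2^-1 *: dlsubmx Theta.

Definition milacW (C : numClosedFieldType) K L (Phi : 'M[C]_(K + L)) : 'M[C]_(L, K) :=
  2^-1 *: dlsubmx Phi.

From mathcomp Require Import all_boot all_order all_algebra.
Import Order.TTheory GRing.Theory Num.Theory.
Local Open Scope ring_scope.

(* Both scattering matrices have the shape [[0, A^T], [A, D]] with A an
   isometry and D symmetric: such a matrix is symmetric by construction, and it
   is unitary as soon as D is orthogonal to the columns of A and fills up the
   complementary part of the identity.  For Theta take A = V^H, D = 0; for Phi
   take A = U1, D = -U2 U2^T, using the unitarity of [U1, U2].  The off-diagonal
   blocks then read off F = V^H / 2 and W = U1 / 2, and the factors 1/2, 4, 1/2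
   cancel, so W P^{1/2} F = U1 diag(s) V^H, which is the reduced SVD of Pd. *)

Section ConjugateTranspose.
Variable C : numClosedFieldType.

Lemma mxconjK m n (A : 'M[C]_(m, n)) : mxconj (mxconj A) = A.
Proof. by apply/matrixP=> i j; rewrite !mxE conjCK. Qed.

Lemma mxconjM m n p (A : 'M[C]_(m, n)) (B : 'M[C]_(n, p)) :
  mxconj (A *m B) = mxconj A *m mxconj B.
Proof. exact: map_mxM. Qed.

Lemma mxconjD m n (A B : 'M[C]_(m, n)) : mxconj (A + B) = mxconj A + mxconj B.
Proof. exact: map_mxD. Qed.

Lemma mxconj1 n : mxconj (1%:M : 'M[C]_n) = 1%:M.
Proof. exact: map_mx1. Qed.

Lemma mxconjT m n (A : 'M[C]_(m, n)) : mxconj A^T = (mxconj A)^T.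
Proof. by rewrite /mxconj map_trmx. Qed.

Lemma mxconjH m n (A : 'M[C]_(m, n)) : mxconj (mxH A) = A^T.
Proof. by rewrite /mxH mxconjT mxconjK. Qed.

Lemma trmx_mxH m n (A : 'M[C]_(m, n)) : (mxH A)^T = mxconj A.
Proof. exact: trmxK. Qed.

Lemma mxHM m n p (A : 'M[C]_(m, n)) (B : 'M[C]_(n, p)) :
  mxH (A *m B) = mxH B *m mxH A.
Proof. by rewrite /mxH mxconjM trmx_mul. Qed.

Lemma mxHK m n (A : 'M[C]_(m, n)) : mxH (mxH A) = A.
Proof. by rewrite /mxH mxconjT mxconjK trmxK. Qed.

Lemma mxHT m n (A : 'M[C]_(m, n)) : mxH A^T = mxconj A.
Proof. by rewrite /mxH mxconjT trmxK. Qed.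

Lemma mxH0 m n : mxH (0 : 'M[C]_(m, n)) = 0.
Proof. by rewrite /mxH /mxconj map_mx0 trmx0. Qed.

Lemma mxHN m n (A : 'M[C]_(m, n)) : mxH (- A) = - mxH A.
Proof. by rewrite /mxH /mxconj map_mxN linearN. Qed.

Lemma mxH_row_mx m n1 n2 (A : 'M[C]_(m, n1)) (B : 'M[C]_(m, n2)) :
  mxH (row_mx A B) = col_mx (mxH A) (mxH B).
Proof. by rewrite /mxH /mxconj map_row_mx tr_row_mx. Qed.

Lemma mxH_block_mx m1 m2 n1 n2 (A : 'M[C]_(m1, n1)) (B : 'M[C]_(m1, n2))
    (D : 'M[C]_(m2, n1)) (E : 'M[C]_(m2, n2)) :
  mxH (block_mx A B D E) = block_mx (mxH A) (mxH D) (mxH B) (mxH E).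
Proof. by rewrite /mxH /mxconj map_block_mx tr_block_mx. Qed.

End ConjugateTranspose.

Lemma rect_diag_mx (R : pzRingType) m n (s : 'I_m -> R) :
  \matrix_(i < m + n, j < m) (if (i : nat) == j then s j else 0)
  = col_mx (diag_mx (\row_j s j)) 0.
Proof.
apply/matrixP=> i j; case: (split_ordP i) => k hk; rewrite hk mxE.
  rewrite col_mxEu !mxE -[_ == _]/(k == j).
  by case: eqVneq => [->|_]; rewrite ?mulr1n ?mulr0n.
by rewrite col_mxEd mxE gtn_eqF // ltn_addr.
Qed.

Section LosslessReciprocal.
Variable C : numClosedFieldType.

Lemma unitary_row_mx m n1 n2 (A : 'M[C]_(m, n1)) (B : 'M[C]_(m, n2)) :
  unitary_mx (row_mx A B) ->
  [/\ mxH A *m A = 1%:M, mxH A *m B = 0, mxH B *m B = 1%:M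
    & A *m mxH A + B *m mxH B = 1%:M].
Proof.
case; rewrite mxH_row_mx mul_col_row mul_row_col scalar_mx_block.
by case/eq_block_mx=> hAA hAB _ hBB hsum.
Qed.

Lemma lossless_reciprocal_block m n (A : 'M[C]_(m, n)) (D : 'M[C]_m) :
  mxH A *m A = 1%:M -> mxH A *m D = 0 ->
  mxconj A *m A^T + mxH D *m D = 1%:M -> D^T = D ->
  lossless_reciprocal (block_mx 0 A^T A D).
Proof.
move=> hAA hAD hsum hDsym; split; last first.
  by rewrite tr_block_mx !trmx0 trmxK hDsym.
have hDA : mxH D *m A = 0 by rewrite -[A]mxHK -mxHM hAD mxH0.
rewrite mxH_block_mx mxH0 mxHT mulmx_block !mul0mx !mulmx0 !add0r hAA hAD hDA.
by rewrite hsum scalar_mx_block.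
Qed.

Lemma unitary_lossless_reciprocal n (V : 'M[C]_n) :
  unitary_mx V -> lossless_reciprocal (block_mx 0 (mxconj V) (mxH V) 0).
Proof.
case=> hVV hVV'; rewrite -trmx_mxH.
apply: lossless_reciprocal_block; rewrite ?mxHK ?mulmx0 ?trmx0 //.
by rewrite trmx_mxH addr0 -mxconjM hVV mxconj1.
Qed.

Lemma row_unitary_lossless_reciprocal m n1 n2
    (A : 'M[C]_(m, n1)) (B : 'M[C]_(m, n2)) :
  unitary_mx (row_mx A B) ->
  lossless_reciprocal (block_mx 0 A^T A (- (B *m B^T))).
Proof.
case/unitary_row_mx=> hAA hAB hBB hsum.
apply: lossless_reciprocal_block => //.
- by rewrite mulmxN mulmxA hAB mul0mx oppr0.
- have hDD : mxH (- (B *m B^T)) *m - (B *m B^T) = mxconj B *m B^T.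
    rewrite mxHN mxHM mxHT mulNmx mulmxN opprK -mulmxA (mulmxA (mxH B)).
    by rewrite hBB mul1mx.
  by rewrite hDD -!mxconjH -!mxconjM -mxconjD hsum mxconj1.
- by rewrite linearN /= trmx_mul trmxK.
Qed.

End LosslessReciprocal.

Theorem theorem1 (C : numClosedFieldType) (K L : nat)
  (hK : (0 < K)%N) (hKL : (K <= L)%N)
  (Pd : 'M[C]_(L, K))
  (U1 : 'M[C]_(L, K)) (U2 : 'M[C]_(L, L - K))
  (s : 'I_K -> C) (V : 'M[C]_K)
  (hU : unitary_mx (row_mx U1 U2))
  (hV : unitary_mx V)
  (hs : forall i, 0 <= s i)
  (hsvd : Pd = row_mx U1 U2
               *m (\matrix_(i < K + (L - K), j < K) (if (i : nat) == j then s j else 0))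
               *m mxH V) :
  let Theta : 'M[C]_(K + K) := block_mx 0 (mxconj V) (mxH V) 0 in
  let Phi : 'M[C]_(K + L) := block_mx 0 U1^T U1 (- (U2 *m U2^T)) in
  let Phalf : 'M[C]_K := 4 *: diag_mx (\row_i s i) in
  [/\ lossless_reciprocal Theta,
      lossless_reciprocal Phi,
      milacF Theta = 2^-1 *: mxH V,
      milacW Phi = 2^-1 *: U1
    & milacW Phi *m Phalf *m milacF Theta = Pd].
Proof.
move=> Theta Phi Phalf.
have hF : milacF Theta = 2^-1 *: mxH V by rewrite /milacF block_mxKdl.
have hW : milacW Phi = 2^-1 *: U1 by rewrite /milacW block_mxKdl.
split=> //; first exact: unitary_lossless_reciprocal.
  exact: row_unitary_lossless_reciprocal.
rewrite hF hW /Phalf hsvd rect_diag_mx mul_row_col mulmx0 addr0.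
have half_four_half : (2^-1 * 4 / 2 : C) = 1.
  by rewrite mulrAC -invfM -natrM mulVf // pnatr_eq0.
by rewrite -!scalemxAr -!scalemxAl !scalerA half_four_half scale1r.
Qed.
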